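(* Let $r\ge1$, let $\delta$ be an integer, and for $x,y\in\mathbb R^r$ put $x\cap y=(\min(x_i,y_i))_{1\le i\le r}$. Let $\lambda,\mu\in\mathbb R^r$. (i) If $\lambda$ and $\mu$ are strictly decreasing and are conjugate under the action of $W(C_r)$, then $\lambda$ and $\lambda\cap\mu$ are conjugate under the action of $W(C_r)$. (ii) If $\lambda$ and $\mu$ are decreasing and are conjugate under the star action of $W(C_r)$, then $\lambda$ and $\lambda\cap\mu$ are conjugate under the star action of $W(C_r)$. (iii) Assertions (i) and (ii) also hold with $W(C_r)$ replaced by $W(D_r)$.
   Context: $W(C_r)$ is the group of signed permutations of the coordinates of $\mathbb R^r$ and $W(D_r)\subseteq W(C_r)$ the subgroup of signed permutations involving an even number of sign changes. $\hat\rho=(-\tfrac\delta2,-\tfrac\delta2-1,\dots,-\tfrac\delta2-(r-1))$ and the star action is $w\star x=w(x+\hat\rho)-\hat\rho$. ''Decreasing'' means $x_1\ge x_2\ge\cdots\ge x_r$; ''strictly decreasing'' means $x_1>\cdots>x_r$. *)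

(* Vectors in R^r are row vectors 'rV[R]_r; coordinates are
   indexed by 'I_r (0-based: coordinate i here is coordinate i+1 of the paper). *)
From HB Require Import structures.
From mathcomp Require Import all_boot all_order all_algebra all_fingroup.
Set Implicit Arguments. Unset Strict Implicit. Unset Printing Implicit Defensive.
Import Order.TTheory GRing.Theory Num.Theory.
Local Open Scope ring_scope.

Section Defs.
Variable R : realFieldType.
Variable r : nat.

(* The signed permutation (s, e): coordinate i of the image is
   (-1)^(e i) * x_(s i).  All such maps form W(C_r). *)
Definition sperm_act (s : 'S_r) (e : {ffun 'I_r -> bool}) (x : 'rV[R]_r) : 'rV[R]_r :=
  \row_i ((-1) ^+ e i * x 0 (s i)).

Inductive weyl_type := TypeC | TypeD.

Definition in_weyl (t : weyl_type) (s : 'S_r) (e : {ffun 'I_r -> bool}) : bool :=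
  match t with
  | TypeC => true
  | TypeD => ~~ odd #|[set i | e i]|
  end.

Definition rho_hat (delta : int) : 'rV[R]_r :=
  \row_(i < r) (- (delta%:~R / 2) - (i : nat)%:R).

Definition star_act (delta : int) s e (x : 'rV[R]_r) : 'rV[R]_r :=
  sperm_act s e (x + rho_hat delta) - rho_hat delta.

Definition weyl_conj (t : weyl_type) (x y : 'rV[R]_r) : Prop :=
  exists s e, in_weyl t s e /\ sperm_act s e x = y.

Definition weyl_star_conj (t : weyl_type) (delta : int) (x y : 'rV[R]_r) : Prop :=
  exists s e, in_weyl t s e /\ star_act delta s e x = y.

Definition vcap (x y : 'rV[R]_r) : 'rV[R]_r := \row_i Num.min (x 0 i) (y 0 i).

Definition decreasing (x : 'rV[R]_r) : Prop :=
  forall i j : 'I_r, (i <= j)%N -> x 0 j <= x 0 i.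

Definition strictly_decreasing (x : 'rV[R]_r) : Prop :=
  forall i j : 'I_r, (i < j)%N -> x 0 j < x 0 i.

End Defs.

From mathcomp Require Import all_boot all_order all_algebra all_fingroup.
From mathcomp Require Import zify lra.
Set Implicit Arguments. Unset Strict Implicit. Unset Printing Implicit Defensive.
Import Order.TTheory GRing.Theory Num.Theory.
Local Open Scope ring_scope.

(* Conjugacy under W(C_r) means that the multisets of absolute values agree;
   under W(D_r) the coordinate products must agree as well (a zero coordinate
   absorbs a surplus sign change).  For decreasing x, y and a threshold a > 0,
   {i | x_i >= a} is an initial and {i | x_i <= -a} a final segment of the
   indices.  Taking x cap y replaces the first by the smaller and the second by
   the larger of the segments for x and y, so the count #{i | |x_i| >= a}, equal
   for x and y, is the same for x cap y.  The negative coordinates of x cap y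
   are exactly those of x or exactly those of y, which preserves the product.  The star action is the linear one conjugated
   by translation by rho-hat, which preserves decreasing vectors and commutes
   with cap. *)

Lemma perm_eq_thresholds d (T : porderType d) (s1 s2 : seq T) :
  (forall a, count (fun z => (a <= z)%O) s1 = count (fun z => (a <= z)%O) s2) ->
  (forall a, count (fun z => (a < z)%O) s1 = count (fun z => (a < z)%O) s2) ->
  perm_eq s1 s2.
Proof.
move=> le12 lt12; apply/allP => a _; apply/eqP.
have count_le s : count (fun z => (a <= z)%O) s =
                  (count_mem a s + count (fun z => (a < z)%O) s)%N.
  elim: s => //= z s ->; rewrite le_eqVlt eq_sym.
  by case: eqP => [->|_]; rewrite ?ltxx /=; lia.
by have := le12 a; rewrite !count_le lt12 => /addIn.
Qed.

Definition down_closed (T : Type) (le : rel T) (A : pred T) : Prop :=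
  forall i j, le i j -> A j -> A i.

Lemma down_closed_comparable (T : finType) (le : rel T) (A B : pred T) :
  total le -> down_closed le A -> down_closed le B ->
  [set i | A i] \subset [set i | B i] \/ [set i | B i] \subset [set i | A i].
Proof.
move=> le_total downA downB.
case: (boolP ([set i | A i] \subset [set i | B i])) => [|/subsetPn [i]]; first by left.
rewrite !inE => Ai notBi; right; apply/subsetP => j; rewrite !inE => Bj.
case/orP: (le_total i j) => [le_ij|le_ji]; last exact: downA le_ji Ai.
by rewrite (downB _ _ le_ij Bj) in notBi.
Qed.

(* If both chains go the same way, the size equation forces [#|A| = #|B|] and
   [#|C| = #|D|]. *)
Lemma cardsIU_comparable (T : finType) (A B C D : {set T}) :
  A \subset B \/ B \subset A -> C \subset D \/ D \subset C ->
  (#|A| + #|C| = #|B| + #|D|)%N -> (#|A :&: B| + #|C :|: D| = #|A| + #|C|)%N.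
Proof.
move=> [AB|BA] [CD|DC] card_eq.
- rewrite (setIidPl AB) (setUidPr CD).
  by have := subset_leq_card AB; have := subset_leq_card CD; lia.
- by rewrite (setIidPl AB) (setUidPl DC).
- by rewrite (setIidPr BA) (setUidPr CD) card_eq.
- rewrite (setIidPr BA) (setUidPl DC).
  by have := subset_leq_card BA; have := subset_leq_card DC; lia.
Qed.

Lemma odd_card_toggle (T : finType) (e : pred T) (i : T) :
  odd #|[set k | (k == i) (+) e k]| = ~~ odd #|[set k | e k]|.
Proof.
rewrite (cardsD1 i [set k | _ (+) _]) (cardsD1 i [set k | e k]) !inE eqxx.
have -> : [set k | (k == i) (+) e k] :\ i = [set k | e k] :\ i.
  by apply/setP => k; rewrite !inE; case: eqP.
by case: (e i); rewrite /= ?negbK.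
Qed.

Section SignedPermutations.
Variables (R : realFieldType) (r : nat).
Implicit Types (x y z : 'rV[R]_r) (s : 'S_r) (e : {ffun 'I_r -> bool}).

Definition norm_tuple x : r.-tuple R := [tuple `|x 0 i| | i < r].

Lemma count_norm_tuple (P : pred R) x :
  count P (norm_tuple x) = #|[set i | P `|x 0 i|]|.
Proof.
rewrite cardE /enum_mem size_filter /= count_map -enumT.
by apply: eq_count => i /=; rewrite inE.
Qed.

Lemma perm_eq_norm_tupleP x y :
  reflect (exists s, forall i, `|y 0 i| = `|x 0 (s i)|)
          (perm_eq (norm_tuple y) (norm_tuple x)).
Proof.
apply: (iffP idP) => [/tuple_permP [s /val_inj norm_y] | [s norm_y]].
  exists s => i; have := congr1 (fun t => tnth t i) norm_y.
  by rewrite !tnth_mktuple.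
apply/seq.permP => P; rewrite !count_norm_tuple.
rewrite -(card_preimset [set i | P `|x 0 i|] (@perm_inj _ s)).
by congr #|pred_of_set _|; apply/setP => i; rewrite !inE norm_y.
Qed.

Lemma sperm_act_norm s e x i : `|sperm_act s e x 0 i| = `|x 0 (s i)|.
Proof. by rewrite mxE normrM normr_sign mul1r. Qed.

Lemma sperm_act_sign_flips s x y :
  (forall i, `|y 0 i| = `|x 0 (s i)|) ->
  sperm_act s [ffun i => y 0 i != x 0 (s i)] x = y.
Proof.
move=> norm_y; apply/rowP => i; rewrite mxE ffunE.
case: eqP => [-> | ne]; first by rewrite mul1r.
move/eqP: (norm_y i); rewrite eqr_norm2 => /orP [/eqP // | /eqP ->].
by rewrite mulN1r.
Qed.

Lemma weyl_conjC_norm x y :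
  weyl_conj TypeC x y <-> perm_eq (norm_tuple y) (norm_tuple x).
Proof.
split=> [[s [e [_ <-]]] | /perm_eq_norm_tupleP [s norm_y]].
  by apply/perm_eq_norm_tupleP; exists s => i; rewrite sperm_act_norm.
by exists s, [ffun i => y 0 i != x 0 (s i)]; rewrite sperm_act_sign_flips.
Qed.

Lemma sum_card_nat (I : finType) (e : pred I) :
  (\sum_i (e i : nat))%N = #|[set i | e i]|.
Proof.
by rewrite -sum1_card [RHS]big_mkcond; apply: eq_bigr => i _; rewrite inE; case: (e i).
Qed.

Lemma prodr_sign_norm (I : finType) (F : I -> R) :
  \prod_i F i = (-1) ^+ #|[set i | F i < 0]| * \prod_i `|F i|.
Proof.
under eq_bigr => i _ do rewrite [F i]numEsign.
by rewrite big_split /= prodrXr sum_card_nat.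
Qed.

Lemma prod_sperm_act s e x :
  \prod_i sperm_act s e x 0 i = (-1) ^+ #|[set i | e i]| * \prod_i x 0 i.
Proof.
under eq_bigr => i _ do rewrite mxE.
rewrite big_split /= prodrXr sum_card_nat; congr (_ * _).
by symmetry; apply: (reindex_inj (@perm_inj _ s)).
Qed.

Lemma prod_norm_perm_eq x y :
  perm_eq (norm_tuple y) (norm_tuple x) -> \prod_i `|y 0 i| = \prod_i `|x 0 i|.
Proof.
case/perm_eq_norm_tupleP => s norm_y; under eq_bigr => i _ do rewrite norm_y.
by symmetry; apply: (reindex_inj (@perm_inj _ s)).
Qed.

Lemma sperm_act_toggle_zero s e x i :
  x 0 (s i) = 0 -> sperm_act s [ffun k => (k == i) (+) e k] x = sperm_act s e x.
Proof.
move=> x_si; apply/rowP => k; rewrite !mxE ffunE.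
by case: eqP => [-> | _] //; rewrite x_si !mulr0.
Qed.

Lemma weyl_conjD_prod x y :
  weyl_conj TypeD x y <->
  perm_eq (norm_tuple y) (norm_tuple x) /\ \prod_i y 0 i = \prod_i x 0 i.
Proof.
split=> [[s [e [even_e <-]]] | [/perm_eq_norm_tupleP [s norm_y] prod_yx]].
  split; first by apply/weyl_conjC_norm; exists s, e.
  by rewrite prod_sperm_act -signr_odd (negbTE even_e) mul1r.
set e := [ffun i => y 0 i != x 0 (s i)].
have act_e : sperm_act s e x = y := sperm_act_sign_flips norm_y.
have [odd_e | even_e] := boolP (odd #|[set i | e i]|); last by exists s, e.
have [/eqP/prodf_eq0 [j _ /eqP x_j] | prod_x_neq0] := eqVneq (\prod_i x 0 i) 0.
  exists s, [ffun k => (k == (s^-1)%g j) (+) e k]; split.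
    by rewrite /=; under eq_finset do rewrite ffunE; rewrite odd_card_toggle odd_e.
  by rewrite sperm_act_toggle_zero ?permKV.
have := prod_sperm_act s e x; rewrite act_e prod_yx -signr_odd odd_e expr1 mulN1r => prod_x.
have prod_x0 : \prod_i x 0 i = 0 by lra.
by rewrite prod_x0 eqxx in prod_x_neq0.
Qed.

Lemma min_up_closed (Q : pred R) :
  down_closed (fun a b => b <= a) Q -> forall a b, Q (Num.min a b) = Q a && Q b.
Proof.
move=> Q_up a b; case: lerP => [ab | ba]; apply/idP/andP => [Qa | [] //].
  by split=> //; apply: Q_up Qa.
by split=> //; apply: Q_up Qa; apply: ltW.
Qed.

Lemma min_down_closed (L : pred R) :
  down_closed <=%R L -> forall a b, L (Num.min a b) = L a || L b.
Proof.
move=> L_down a b; case: lerP => [ab | ba]; apply/idP/orP.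
- by left.
- by case=> // Lb; apply: L_down Lb.
- by right.
- by case=> // La; apply: L_down La; apply: ltW.
Qed.

Lemma decreasing_up_comparable (U : pred R) x y :
  down_closed (fun a b => b <= a) U -> decreasing x -> decreasing y ->
  [set i | U (x 0 i)] \subset [set i | U (y 0 i)] \/
  [set i | U (y 0 i)] \subset [set i | U (x 0 i)].
Proof.
move=> U_up dec_x dec_y.
apply: (@down_closed_comparable _ (fun i j : 'I_r => i <= j)%N (fun i => U (x 0 i))
  (fun i => U (y 0 i))) => [i j | i j | i j] /=.
- exact: leq_total.
- by move=> /dec_x; apply: U_up.
- by move=> /dec_y; apply: U_up.
Qed.

Lemma decreasing_down_comparable (L : pred R) x y :
  down_closed <=%R L -> decreasing x -> decreasing y ->
  [set i | L (x 0 i)] \subset [set i | L (y 0 i)] \/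
  [set i | L (y 0 i)] \subset [set i | L (x 0 i)].
Proof.
move=> L_down dec_x dec_y.
apply: (@down_closed_comparable _ (fun i j : 'I_r => j <= i)%N (fun i => L (x 0 i))
  (fun i => L (y 0 i))) => [i j | i j | i j] /=.
- exact: leq_total.
- by move=> /dec_x; apply: L_down.
- by move=> /dec_y; apply: L_down.
Qed.

Lemma card_norm_split (Q : pred R) x :
  down_closed (fun a b => b <= a) Q -> ~~ Q 0 ->
  #|[set i | Q `|x 0 i|]| = (#|[set i | Q (x 0%R i)]| + #|[set i | Q (- x 0%R i)]|)%N.
Proof.
move=> Q_up notQ0.
have -> : [set i | Q `|x 0 i|] = [set i | Q (x 0 i)] :|: [set i | Q (- x 0 i)].
  apply/setP => i; rewrite !inE; have [xi_ge0 | xi_lt0] := lerP 0 (x 0 i).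
    by rewrite ger0_norm //; apply/esym/orb_idr => /Q_up; apply; lra.
  by rewrite ltr0_norm //; apply/esym/orb_idl => /Q_up; apply; lra.
rewrite cardsU; have -> : [set i | Q (x 0 i)] :&: [set i | Q (- x 0 i)] = set0.
  apply/setP => i; rewrite !inE; apply/negP => /andP [Q_xi Q_opp_xi].
  have [xi_le0 | xi_gt0] := lerP (x 0 i) 0.
    by move: notQ0; rewrite (Q_up _ _ xi_le0 Q_xi).
  by move: notQ0; rewrite (Q_up 0 (- x 0 i)) //; lra.
by rewrite cards0 subn0.
Qed.

Lemma count_norm_vcap (Q : pred R) x y :
  down_closed (fun a b => b <= a) Q -> decreasing x -> decreasing y ->
  count Q (norm_tuple y) = count Q (norm_tuple x) ->
  count Q (norm_tuple (vcap x y)) = count Q (norm_tuple x).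
Proof.
move=> Q_up dec_x dec_y; rewrite !count_norm_tuple.
have [Q0 | notQ0] := boolP (Q 0).
  have full z : [set i | Q `|z 0 i|] = setT.
    by apply/setP => i; rewrite !inE (Q_up _ _ _ Q0).
  by rewrite !full.
have Qopp_down : down_closed <=%R (fun a => Q (- a)).
  by move=> a b ab /Q_up; apply; rewrite lerN2.
rewrite !(card_norm_split _ Q_up notQ0) => card_eq.
have -> : [set i | Q (vcap x y 0 i)] = [set i | Q (x 0 i)] :&: [set i | Q (y 0 i)].
  by apply/setP => i; rewrite !inE mxE min_up_closed.
have -> : [set i | Q (- vcap x y 0 i)] =
          [set i | Q (- x 0 i)] :|: [set i | Q (- y 0 i)].
  by apply/setP => i; rewrite !inE mxE (min_down_closed Qopp_down).
apply: cardsIU_comparable (esym card_eq); first exact: decreasing_up_comparable.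
exact: (decreasing_down_comparable Qopp_down).
Qed.

Lemma perm_eq_norm_vcap x y :
  decreasing x -> decreasing y -> perm_eq (norm_tuple y) (norm_tuple x) ->
  perm_eq (norm_tuple (vcap x y)) (norm_tuple x).
Proof.
move=> dec_x dec_y /seq.permP count_eq.
by apply: perm_eq_thresholds => a; apply: count_norm_vcap => // b c cb ac;
  [exact: le_trans ac cb | exact: lt_le_trans ac cb].
Qed.

Lemma prod_vcap x y :
  decreasing x -> decreasing y -> perm_eq (norm_tuple y) (norm_tuple x) ->
  \prod_i y 0 i = \prod_i x 0 i -> \prod_i vcap x y 0 i = \prod_i x 0 i.
Proof.
move=> dec_x dec_y norm_yx prod_yx.
have neg_down : down_closed <=%R (fun a : R => a < 0).
  by move=> a b ab b_neg; exact: le_lt_trans ab b_neg.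
rewrite prodr_sign_norm (prod_norm_perm_eq (perm_eq_norm_vcap dec_x dec_y norm_yx)).
have -> : [set i | vcap x y 0 i < 0] = [set i | x 0 i < 0] :|: [set i | y 0 i < 0].
  by apply/setP => i; rewrite !inE mxE (min_down_closed neg_down).
have [neg_xy | neg_yx] := decreasing_down_comparable neg_down dec_x dec_y.
  by rewrite (setUidPr neg_xy) -(prod_norm_perm_eq norm_yx) -prodr_sign_norm.
by rewrite (setUidPl neg_yx) -prodr_sign_norm.
Qed.

Lemma weyl_conj_vcap t x y :
  decreasing x -> decreasing y -> weyl_conj t x y -> weyl_conj t x (vcap x y).
Proof.
move=> dec_x dec_y; case: t.
  by rewrite !weyl_conjC_norm; apply: perm_eq_norm_vcap.
rewrite !weyl_conjD_prod => -[norm_yx prod_yx]; split.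
  exact: perm_eq_norm_vcap.
exact: prod_vcap.
Qed.

Lemma weyl_star_conjE t delta x y :
  weyl_star_conj t delta x y <->
  weyl_conj t (x + rho_hat R r delta) (y + rho_hat R r delta).
Proof.
split=> -[s [e [in_t act]]]; exists s, e; split=> //.
  by rewrite -act /star_act subrK.
by rewrite /star_act act addrK.
Qed.

Lemma vcapDr x y z : vcap (x + z) (y + z) = vcap x y + z.
Proof. by apply/rowP => i; rewrite !mxE real_addr_minl ?num_real. Qed.

Lemma decreasingD x y : decreasing x -> decreasing y -> decreasing (x + y).
Proof. by move=> dec_x dec_y i j ij; rewrite !mxE lerD ?dec_x ?dec_y. Qed.

Lemma rho_hat_decreasing delta : decreasing (rho_hat R r delta).
Proof. by move=> i j ij; rewrite !mxE lerD2l lerN2 ler_nat. Qed.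

Lemma strictly_decreasing_decreasing x : strictly_decreasing x -> decreasing x.
Proof.
move=> sdec_x i j; rewrite leq_eqVlt => /orP [/eqP/val_inj -> // | /sdec_x].
exact: ltW.
Qed.

End SignedPermutations.

Theorem proposition3p2 (R : realFieldType) (r : nat) (delta : int)
    (lambda mu : 'rV[R]_r) :
  (1 <= r)%N ->
  forall t : weyl_type,
    (strictly_decreasing lambda -> strictly_decreasing mu ->
       weyl_conj t lambda mu -> weyl_conj t lambda (vcap lambda mu)) /\
    (decreasing lambda -> decreasing mu ->
       weyl_star_conj t delta lambda mu ->
       weyl_star_conj t delta lambda (vcap lambda mu)).
Proof.
move=> _ t; split=> [sdec_lambda sdec_mu | dec_lambda dec_mu].
  by apply: weyl_conj_vcap; apply: strictly_decreasing_decreasing.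
rewrite !weyl_star_conjE -vcapDr.
by apply: weyl_conj_vcap; apply: decreasingD => //; apply: rho_hat_decreasing.
Qed.
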